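(* Let $Q$ be a proper quasi-ideal of a finite-dimensional Lie algebra $L$ over a field $F$ which is modular* in $L$. Then $Q$ is a strong quasi-ideal of $L$; consequently either $Q$ is a strong ideal of $L$, or $L$ is almost abelian, or $F$ has characteristic two and there is an isomorphism $L\cong K$ carrying $Q$ onto $Fc$.
   Context: $K$ denotes the three-dimensional Lie algebra with basis $a,b,c$ and products $[a,b]=c$, $[b,c]=b$, $[a,c]=a$. $\langle U,B\rangle$ denotes the subalgebra generated by $U\cup B$. A subalgebra $Q$ is a quasi-ideal of $L$ if $[Q,V]\subseteq Q+V$ for every subspace $V$ of $L$. A subalgebra $U$ is modular* in $L$ if $\langle U,B\rangle\cap C=\langle B,U\cap C\rangle$ for all subalgebras $B\subseteq C$ of $L$, and $\langle U\cap B,C\rangle=\langle B,C\rangle\cap U$ for all subalgebras $B,C$ of $L$ with $C\subseteq U$. A subalgebra $U$ of $L$ is a strong ideal (respectively strong quasi-ideal) of $L$ if every one-dimensional subalgebra of $U$ is an ideal (respectively quasi-ideal) of $L$. $L$ is almost abelian if $L=L^2\oplus Fx$ for some $x$, where $L^2=[L,L]$ is abelian and $\mathrm{ad}\,x$ acts as the identity map on $L^2$. *)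

From HB Require Import structures.
From mathcomp Require Import all_boot all_order all_algebra.
Set Implicit Arguments. Unset Strict Implicit. Unset Printing Implicit Defensive.
Import GRing.Theory.
Local Open Scope ring_scope.

Section Lie.
Variables (F : fieldType) (L : vectType F).

Definition is_lie_bracket (br : L -> L -> L) : Prop :=
  [/\ forall (a : F) (x y z : L), br (a *: x + y) z = a *: br x z + br y z,
      forall (a : F) (x y z : L), br x (a *: y + z) = a *: br x y + br x z,
      forall x : L, br x x = 0 &
      forall x y z : L, br x (br y z) + br y (br z x) + br z (br x y) = 0].

Variable br : L -> L -> L.

(* [A, B] : the subspace spanned by all brackets [a, b], a in A, b in B
   (by bilinearity it suffices to take basis vectors). *)
Definition brsp (A B : {vspace L}) : {vspace L} :=
  (<<[seq br a b | a <- vbasis A, b <- vbasis B]>>)%VS.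

Definition subalgebra (A : {vspace L}) : Prop :=
  forall x y, x \in A -> y \in A -> br x y \in A.

(* The subalgebra generated by (the subspace) X: iterate S |-> S + [S,S]
   dim L times (the chain stabilises within dim L steps). *)
Definition gen (X : {vspace L}) : {vspace L} :=
  iter (\dim {:L}) (fun S => (S + brsp S S)%VS) X.

Definition genU (U B : {vspace L}) : {vspace L} := gen (U + B)%VS.

Definition ideal (I : {vspace L}) : Prop :=
  forall x y, x \in I -> br x y \in I.

Definition quasi_ideal (Q : {vspace L}) : Prop :=
  subalgebra Q /\ forall V : {vspace L}, (brsp Q V <= Q + V)%VS.

Definition modular_star (U : {vspace L}) : Prop :=
  subalgebra U /\
  (forall B C : {vspace L}, subalgebra B -> subalgebra C -> (B <= C)%VS ->
     (genU U B :&: C)%VS = genU B (U :&: C)%VS) /\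
  (forall B C : {vspace L}, subalgebra B -> subalgebra C -> (C <= U)%VS ->
     genU (U :&: B)%VS C = (genU B C :&: U)%VS).

Definition strong_ideal (U : {vspace L}) : Prop :=
  subalgebra U /\
  forall S : {vspace L}, (S <= U)%VS -> \dim S = 1%N -> subalgebra S -> ideal S.

Definition strong_quasi_ideal (U : {vspace L}) : Prop :=
  subalgebra U /\
  forall S : {vspace L}, (S <= U)%VS -> \dim S = 1%N -> subalgebra S ->
    quasi_ideal S.

Definition almost_abelian : Prop :=
  exists x : L,
    let L2 := brsp fullv fullv in
    [/\ (L2 + <[x]>)%VS = fullv, (L2 :&: <[x]>)%VS = 0%VS,
        (forall u v, u \in L2 -> v \in L2 -> br u v = 0) &
        (forall u, u \in L2 -> br x u = u)].

(* There is an isomorphism L ~= K carrying Q onto Fc, where K has basis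
   a,b,c with [a,b]=c, [b,c]=b, [a,c]=a: equivalently L has a basis
   (the preimages) a,b,c with these products, and Q = F c. *)
Definition iso_K_with (Q : {vspace L}) : Prop :=
  exists a b c : L,
    [/\ basis_of fullv [:: a; b; c],
        br a b = c, br b c = b, br a c = a & Q = <[c]>%VS].

End Lie.

(* For c in Q and y outside Q, the second modular* identity
   (with B = Fy, C = Fc) shows that the subalgebra generated by y and c meets
   Q in Fc; since [c, y] is in Q + Fy, this puts [c, y] in the plane Fc + Fy.
   Properness of Q extends this "plane property" to all y, and it is exactly
   what makes Q a strong quasi-ideal.  If Q is not a strong ideal, some x in Q
   has [x, y0] outside Fx; after rescaling, the plane property says that
   ad x - 1 maps every line into itself modulo Fx and y0 into Fx, so by a
   linear algebra lemma ad x is the identity modulo Fx.  Then L = V + Fx,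
   where V is the fixed space of ad x, and since ad x is a derivation the
   bracket of two fixed vectors lies on Fx and is killed by 2.  If V is
   abelian, L^2 lies in V and L is almost abelian.  Otherwise char F = 2, a
   non-commuting pair u, v of fixed vectors completes x to a basis with the
   multiplication table of K, and the plane property forces Q = Fx. *)

From HB Require Import structures.
From mathcomp Require Import all_boot all_order all_algebra.
From Stdlib Require Import Classical.
Set Implicit Arguments. Unset Strict Implicit. Unset Printing Implicit Defensive.
Import GRing.Theory.
Local Open Scope ring_scope.

Section LinearAlgebra.
Variables (F : fieldType) (L : vectType F).
Implicit Types (A Q W : {vspace L}) (y z : L).

Lemma memvZV Q (k : F) y : k != 0 -> k *: y \in Q -> y \in Q.
Proof. by move=> k0 /(memvZ k^-1); rewrite scalerK. Qed.

Lemma capv_addv_line A Q z :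
  (A <= Q)%VS -> z \notin Q -> ((A + <[z]>) :&: Q <= A)%VS.
Proof.
move=> AQ zQ; apply/subvP => w; rewrite memv_cap.
case/andP => /memv_addP [a aA [_ /vlineP [k ->] ->]] wQ.
have kzQ : k *: z \in Q by rewrite -(addKr a (k *: z)) memvD // memvN (subvP AQ).
have [k0 | k0] := eqVneq k 0; first by rewrite k0 scale0r addr0.
by rewrite (memvZV k0 kzQ) in zQ.
Qed.

(* A linear map T preserving W and mapping every line into itself modulo W
   induces a scalar on L/W; if it maps some y0 outside W into W, that scalar
   is 0, i.e. T maps all of L into W.  The cases are y in W + Fy0, and y
   independent from y0 modulo W, where comparing T y, T y0 and T (y + y0)
   modulo W forces the eigenvalue of y to vanish. *)
Lemma linear_into_subspace W (T : {linear L -> L}) y0 :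
  (forall w, w \in W -> T w \in W) -> (forall y, T y \in (W + <[y]>)%VS) ->
  y0 \notin W -> T y0 \in W -> forall y, T y \in W.
Proof.
move=> TW Tline y0W Ty0 y.
have [/memv_addP [w wW [_ /vlineP [t ->] ->]] | yWy0] := boolP (y \in (W + <[y0]>)%VS).
  by rewrite linearD linearZ; apply: memvD; [apply: TW | apply: memvZ].
have [w1 w1W [_ /vlineP [m ->] Ey]] := memv_addP (Tline y).
have [w2 w2W [_ /vlineP [n ->] Eyy0]] := memv_addP (Tline (y + y0)).
have dW : (n - m) *: y + n *: y0 \in W.
  have Ty0E : T y0 = (w2 + n *: (y + y0)) - (w1 + m *: y).
    by rewrite -Ey -Eyy0 linearD addrC addKr.
  have -> : (n - m) *: y + n *: y0 = T y0 - (w2 - w1).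
    rewrite Ty0E scalerBl scalerDr opprD opprB !addrA [RHS](ACl ((1*7)*(4*6)*(2*5)*3)) /=.
    by rewrite subrr addNr !add0r.
  by rewrite memvB ?memvB.
have nm : n - m = 0.
  apply: contraNeq yWy0 => nm0; apply: (memvZV nm0).
  rewrite -(addrK (n *: y0) ((n - m) *: y)) -scaleNr.
  exact: memv_add dW (memvZ _ (memv_line _)).
have n0 : n = 0.
  apply: contraNeq y0W => n0; apply: (memvZV n0).
  by move: dW; rewrite nm scale0r add0r.
have m0 : m = 0 by move/eqP: nm; rewrite n0 sub0r oppr_eq0 => /eqP.
by rewrite Ey m0 scale0r addr0.
Qed.
End LinearAlgebra.

Section LieAlgebra.
Variables (F : fieldType) (L : vectType F) (br : L -> L -> L).
Hypothesis Hlie : is_lie_bracket br.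

Lemma brDl x y z : br (x + y) z = br x z + br y z.
Proof. by case: Hlie => lin _ _ _; have := lin 1 x y z; rewrite !scale1r. Qed.

Lemma brDr x y z : br x (y + z) = br x y + br x z.
Proof. by case: Hlie => _ lin _ _; have := lin 1 x y z; rewrite !scale1r. Qed.

Lemma br0l z : br 0 z = 0.
Proof. by apply: (addrI (br 0 z)); rewrite -brDl !addr0. Qed.

Lemma br0r z : br z 0 = 0.
Proof. by apply: (addrI (br z 0)); rewrite -brDr !addr0. Qed.

Lemma brZl k x z : br (k *: x) z = k *: br x z.
Proof. by case: Hlie => lin _ _ _; have := lin k x 0 z; rewrite addr0 br0l addr0. Qed.

Lemma brZr k x z : br z (k *: x) = k *: br z x.
Proof. by case: Hlie => _ lin _ _; have := lin k z x 0; rewrite addr0 br0r addr0. Qed.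

Lemma brxx x : br x x = 0.
Proof. by case: Hlie. Qed.

Lemma brC x y : br y x = - br x y.
Proof.
apply/eqP; rewrite -addr_eq0 addrC.
by have := brxx (x + y); rewrite brDl !brDr !brxx add0r addr0 => ->.
Qed.

Lemma brNr x z : br z (- x) = - br z x.
Proof. by rewrite -scaleN1r brZr scaleN1r. Qed.

Lemma brBr x y z : br z (x - y) = br z x - br z y.
Proof. by rewrite brDr brNr. Qed.

Lemma br_derivation x y z : br x (br y z) = br (br x y) z + br y (br x z).
Proof.
case: Hlie => _ _ _ /(_ x y z) /eqP.
rewrite (brC x z) brNr (brC (br x y) z) -addrA -opprD subr_eq0 => /eqP ->.
exact: addrC.
Qed.

Lemma mem_brsp (A B : {vspace L}) a b : a \in A -> b \in B -> br a b \in brsp br A B.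
Proof.
move=> Aa Bb.
rewrite (coord_vbasis Aa); elim/big_rec: _ => [|i w _ IH]; first by rewrite br0l mem0v.
rewrite brDl brZl memvD // memvZ //.
rewrite (coord_vbasis Bb); elim/big_rec: _ => [|j w' _ IH']; first by rewrite br0r mem0v.
rewrite brDr brZr memvD // memvZ //.
by apply: memv_span; apply: allpairs_f; apply: mem_nth; rewrite size_tuple.
Qed.

Lemma brsp_sub (A B W : {vspace L}) :
  (forall a b, a \in A -> b \in B -> br a b \in W) -> (brsp br A B <= W)%VS.
Proof.
move=> AB; apply/span_subvP => w /allpairsP [[a b] [/= Aa Bb ->]].
by apply: AB; apply: vbasis_mem.
Qed.

Lemma gen_iter_sub n (X : {vspace L}) :
  (X <= iter n (fun S => (S + brsp br S S)%VS) X)%VS.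
Proof. by elim: n => [|n IH] //=; apply: subv_trans IH (addvSl _ _). Qed.

Lemma gen_sub (X : {vspace L}) : (X <= gen br X)%VS.
Proof. exact: gen_iter_sub. Qed.

Lemma gen_br (X : {vspace L}) a b : a \in X -> b \in X -> br a b \in gen br X.
Proof.
rewrite /gen; case dimL: (\dim (fullv : {vspace L})) => [|n] Xa Xb /=.
  have /eqP L0 : (fullv : {vspace L}) == 0%VS by rewrite -dimv_eq0 dimL.
  by have := memvf (br a b); rewrite L0 memv0 => /eqP ->; apply: mem0v.
by apply: (subvP (addvSr _ _)); apply: mem_brsp; apply: (subvP (gen_iter_sub _ _)).
Qed.

Lemma gen_id (X : {vspace L}) : subalgebra br X -> gen br X = X.
Proof.
move=> subX; rewrite /gen; elim: (\dim fullv) => // n /= ->.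
by apply/addv_idPl; apply: brsp_sub => a b; apply: subX.
Qed.

Lemma subalgebra_line v : subalgebra br <[v]>%VS.
Proof.
by move=> a b /vlineP [k ->] /vlineP [l ->]; rewrite brZl brZr brxx !scaler0 mem0v.
Qed.

Lemma ad_sub_id_is_linear x : linear (fun y => br x y - y).
Proof. by move=> k u v; rewrite brDr brZr scalerBr opprD addrACA. Qed.

Definition ad_sub_id x : {linear L -> L} :=
  HB.pack (fun y => br x y - y)
    (GRing.isLinear.Build F L L *:%R _ (ad_sub_id_is_linear x)).

Lemma ad_sub_idE x y : ad_sub_id x y = br x y - y.
Proof. by []. Qed.

Definition fixedv x : {vspace L} := lker (linfun (ad_sub_id x)).

Lemma fixedvP x w : reflect (br x w = w) (w \in fixedv x).
Proof. by rewrite memv_ker lfunE ad_sub_idE subr_eq0; apply: eqP. Qed.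

Lemma fixedv_line0 x w : w \in fixedv x -> w \in <[x]>%VS -> w = 0.
Proof. by move=> /fixedvP Pw /vlineP [k Ew]; rewrite -Pw Ew brZr brxx scaler0. Qed.

Section ModularQuasiIdeal.
Variable Q : {vspace L}.
Hypotheses (HQ : quasi_ideal br Q) (Hproper : Q != fullv) (Hmod : modular_star br Q).

(* The second modular* identity with B = Fy and C = Fc. *)
Lemma gen_plane_capQ c y : c \in Q -> y \notin Q ->
  (gen br (<[y]> + <[c]>) :&: Q)%VS = <[c]>%VS.
Proof.
move=> cQ yQ; case: Hmod => _ [_].
move/(_ _ _ (subalgebra_line (v:=y)) (subalgebra_line (v:=c))).
have Qy0 : (Q :&: <[y]> = 0)%VS.
  by apply/eqP; rewrite -subv0 capvC -[<[y]>%VS]add0v capv_addv_line ?sub0v.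
rewrite memvE in cQ; move/(_ cQ).
by rewrite /genU Qy0 add0v gen_id //; apply: subalgebra_line.
Qed.

Lemma bracket_in_plane_out c y :
  c \in Q -> y \notin Q -> br c y \in (<[c]> + <[y]>)%VS.
Proof.
move=> cQ yQ; case: HQ => _ /(_ <[y]>%VS) /subvP HQy.
have /memv_addP [q qQ [t ty Ecy]] := HQy _ (mem_brsp cQ (memv_line y)).
have gen_cy : (<[y]> + <[c]> <= gen br (<[y]> + <[c]>))%VS := gen_sub _.
have qc : q \in <[c]>%VS.
  rewrite -(gen_plane_capQ cQ yQ) memv_cap qQ andbT.
  have -> : q = br c y - t by rewrite Ecy addrK.
  apply: memvB; last by apply: (subvP gen_cy); apply: (subvP (addvSl _ _)).
  by apply: gen_br; [apply: (subvP (addvSr _ _)) | apply: (subvP (addvSl _ _))];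
    apply: memv_line.
by rewrite Ecy memv_add.
Qed.

(* The plane property for every y: if y is in Q, pick z outside Q; then
   [c, y] = [c, y + z] - [c, z] lies in Q and in Fc + Fy + Fz, hence in
   Fc + Fy by the modular law for lines. *)
Lemma bracket_in_plane c y : c \in Q -> br c y \in (<[c]> + <[y]>)%VS.
Proof.
move=> cQ; have [yQ | yQ] := boolP (y \in Q); last exact: bracket_in_plane_out.
have [z _ zQ] : exists2 z, z \in fullv & z \notin Q.
  by apply/subvPn; apply: contra Hproper => LQ; apply/eqP/subv_anti; rewrite LQ subvf.
have yzQ : y + z \notin Q.
  by apply: contra zQ => yzQ; rewrite -(addKr y z) memvD ?memvN.
have cyQ : (<[c]> + <[y]> <= Q)%VS by rewrite subv_add -!memvE cQ yQ.
apply: (subvP (capv_addv_line cyQ zQ)); rewrite memv_cap; apply/andP; split.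
  have -> : br c y = br c (y + z) - br c z by rewrite -brBr addrK.
  apply: memvB.
    apply: (subvP _ _ (bracket_in_plane_out cQ yzQ)); rewrite -addvA.
    by apply: addvS; rewrite // -memvE memv_add ?memv_line.
  by apply: (subvP _ _ (bracket_in_plane_out cQ zQ)); apply: addvS; rewrite // addvSl.
by case: HQ => subQ _; apply: subQ.
Qed.

(* The plane property makes every line of Q a quasi-ideal. *)
Lemma strong_quasi_ideal_of_modular : strong_quasi_ideal br Q.
Proof.
split=> [|S SQ _ subS]; first by case: HQ.
split=> // V; apply: brsp_sub => a b aS bV.
by apply: (subvP _ _ (bracket_in_plane b (subvP SQ _ aS))); apply: addvS; rewrite -memvE.
Qed.

(* If Q is not a strong ideal, some x in Q acts on L as the identity modulo
   Fx: take x1 in Q with [x1, y0] outside Fx1, rescale it to x so that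
   [x, y0] = y0 modulo Fx, and apply linear_into_subspace to ad x - 1. *)
Lemma ad_identity_mod_line : ~ strong_ideal br Q ->
  exists2 x, x \in Q & forall y, br x y - y \in <[x]>%VS.
Proof.
move=> notSI.
have [x1 [y0 [x1Q x1y0]]] : exists x1 y0, x1 \in Q /\ br x1 y0 \notin <[x1]>%VS.
  apply: NNPP => lines; apply: notSI; split=> [|S SQ _ _ a y aS]; first by case: HQ.
  rewrite memvE in aS; apply: (subvP aS); apply: contra_notT lines => ay.
  by exists a, y; rewrite memvE (subv_trans aS SQ).
have /memv_addP [p px1 [_ /vlineP [l ->] Ex1y0]] := bracket_in_plane y0 x1Q.
have l0 : l != 0 by apply: contraNneq x1y0 => l0; rewrite Ex1y0 l0 scale0r addr0.
pose x := l^-1 *: x1.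
have x1x : (<[x1]> <= <[x]>)%VS by rewrite -memvE -(scalerKV l0 x1) memvZ ?memv_line.
have xQ : x \in Q by rewrite memvZ.
exists x => // y; rewrite -ad_sub_idE.
apply: (linear_into_subspace (y0 := y0)) => [w /vlineP [k ->] | z | | ].
- by rewrite ad_sub_idE brZr brxx scaler0 sub0r memvN memvZ ?memv_line.
- rewrite ad_sub_idE memvB ?bracket_in_plane //.
  by apply: (subvP (addvSr _ _)); apply: memv_line.
- by apply: contra x1y0 => /vlineP [k ->]; rewrite /x !brZr brxx !scaler0 mem0v.
- rewrite ad_sub_idE /x brZl Ex1y0 scalerDr scalerA mulVf // scale1r addrK.
  by rewrite memvZ // (subvP x1x).
Qed.

End ModularQuasiIdeal.

Section FixedSpace.
Variable x : L.
Hypothesis Hx : forall y, br x y - y \in <[x]>%VS.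

Lemma fixedv_add_line : (fixedv x + <[x]>)%VS = fullv.
Proof.
apply/subv_anti; rewrite subvf /=; apply/subvP => y _.
rewrite -[y](subKr (br x y)) memvB //; last exact: (subvP (addvSr _ _)).
apply: (subvP (addvSl _ _)); apply/fixedvP.
have /vlineP [k Ek] := Hx y; have Ey : br x y = k *: x + y by rewrite -Ek subrK.
by rewrite {1}Ey brDr brZr brxx scaler0 add0r.
Qed.

(* ad x is a derivation fixing u and v, so it doubles [u, v]; as it is also
   the identity modulo Fx, [u, v] lies on Fx and is killed by 2. *)
Lemma fixedv_bracket u v : u \in fixedv x -> v \in fixedv x ->
  br u v \in <[x]>%VS /\ br u v + br u v = 0.
Proof.
move=> /fixedvP Pu /fixedvP Pv.
have Ex : br x (br u v) = br u v + br u v by rewrite br_derivation Pu Pv.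
have uvx : br u v \in <[x]>%VS by have := Hx (br u v); rewrite Ex addrK.
by split=> //; rewrite -Ex; case/vlineP: uvx => k ->; rewrite brZr brxx scaler0.
Qed.

(* If the fixed vectors commute, L^2 consists of fixed vectors and
   L = L^2 (+) Fx is almost abelian. *)
Lemma almost_abelian_of_fixed_commute :
  {in fixedv x &, forall u v, br u v = 0} -> almost_abelian br.
Proof.
move=> comm.
have L2_fixed : (brsp br fullv fullv <= fixedv x)%VS.
  apply: brsp_sub => a b _ _.
  have : a \in (fixedv x + <[x]>)%VS by rewrite fixedv_add_line memvf.
  case/memv_addP => w1 w1f [_ /vlineP [s ->] ->].
  have : b \in (fixedv x + <[x]>)%VS by rewrite fixedv_add_line memvf.
  case/memv_addP => w2 w2f [_ /vlineP [t ->] ->].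
  have /fixedvP Pw1 := w1f; have /fixedvP Pw2 := w2f.
  rewrite !brDl !brDr !brZl !brZr comm // (brC x w1) Pw1 Pw2 brxx !scaler0 add0r addr0.
  by rewrite memvD ?memvZ ?memvN.
exists x => /=; split.
- apply/subv_anti; rewrite subvf /=; apply/subvP => y _.
  rewrite -[y](subKr (br x y)) memvB //.
    by apply: (subvP (addvSl _ _)); apply: mem_brsp; apply: memvf.
  exact: (subvP (addvSr _ _)).
- apply/eqP; rewrite -subv0; apply/subvP => w.
  rewrite memv_cap memv0 => /andP [wL2 wx].
  by rewrite (fixedv_line0 (subvP L2_fixed _ wL2) wx).
- by move=> u v /(subvP L2_fixed) uf /(subvP L2_fixed) vf; apply: comm.
- by move=> u /(subvP L2_fixed) /fixedvP.
Qed.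

Section FixedPair.
Variables u v : L.
Hypotheses (uf : u \in fixedv x) (vf : v \in fixedv x) (Euv : br u v = x).

(* Jacobi on w, u, v: [w, x] = -w is a combination of u and v. *)
Lemma fixedv_sub_plane : (fixedv x <= <[u]> + <[v]>)%VS.
Proof.
apply/subvP => w wf; have /fixedvP Pw := wf.
have /fixedvP Pu := uf; have /fixedvP Pv := vf.
have [/vlineP [q Eq] _] := fixedv_bracket wf uf.
have [/vlineP [p Ep] _] := fixedv_bracket wf vf.
have := br_derivation w u v; rewrite Euv Eq Ep brZl brZr (brC x w) (brC x u) Pw Pu Pv.
by move=> Ew; rewrite -[w]opprK Ew memvN addrC memv_add ?memvZ ?memvN ?memv_line.
Qed.

(* u, v, x is a basis: a relation among them would make v, or u - s v, a
   fixed vector on Fx, hence zero, and then x = [u, v] = 0; they span L by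
   fixedv_sub_plane and fixedv_add_line. *)
Lemma fixed_pair_basis : x != 0 -> basis_of fullv [:: u; v; x].
Proof.
move=> x0.
have vx : v \notin <[x]>%VS.
  by apply: contra x0 => /(fixedv_line0 vf) v0; rewrite -Euv v0 br0r.
have uvx : u \notin (<[v]> + <[x]>)%VS.
  apply: contra x0 => /memv_addP [_ /vlineP [s ->] [_ /vlineP [t ->] Eu]].
  have usv : u - s *: v = 0.
    apply: (fixedv_line0 (x := x)); first by rewrite memvB ?memvZ.
    by rewrite Eu addrC addKr memvZ ?memv_line.
  by rewrite -Euv (subr0_eq usv) brZl brxx scaler0.
rewrite /basis_of free_cons free_cons seq1_free !span_cons span_nil addv0.
rewrite vx uvx x0 !andbT.
apply/eqP/subv_anti; rewrite subvf /= -fixedv_add_line addvA.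
by apply: addvS; [exact: fixedv_sub_plane | exact: subvv].
Qed.

(* A fixed vector w whose brackets [w, z] stay in Fw + Fz vanishes: those
   brackets with fixed z are fixed vectors on Fx, hence zero, and then the
   Jacobi identity gives -w = [w, [u, v]] = 0. *)
Lemma fixed_plane_vector0 w : w \in fixedv x ->
  (forall z, br w z \in (<[w]> + <[z]>)%VS) -> w = 0.
Proof.
move=> wf wplane.
have brw0 z : z \in fixedv x -> br w z = 0.
  move=> zf; apply: (fixedv_line0 (x := x)); last exact: (fixedv_bracket wf zf).1.
  by apply: (subvP _ _ (wplane z)); rewrite subv_add -!memvE wf zf.
have := br_derivation w u v.
rewrite Euv (brw0 _ uf) (brw0 _ vf) br0l br0r addr0 (brC x w).
by move/fixedvP: wf => -> /eqP; rewrite oppr_eq0 => /eqP.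
Qed.

End FixedPair.

Lemma iso_K_of_fixed_noncommute (Q : {vspace L}) u v :
  x \in Q -> {in Q, forall c y, br c y \in (<[c]> + <[y]>)%VS} ->
  u \in fixedv x -> v \in fixedv x -> br u v != 0 ->
  2%N \in [pchar F] /\ iso_K_with br Q.
Proof.
move=> xQ Qplane uf vf uv0.
have [/vlineP [g Eg] uv2] := fixedv_bracket uf vf.
have g0 : g != 0 by apply: contraNneq uv0 => g0; rewrite Eg g0 scale0r.
have x0 : x != 0 by apply: contraNneq uv0 => x0; rewrite Eg x0 scaler0.
have char2 : 2%N \in [pchar F].
  move: uv2; rewrite -mulr2n -scaler_nat => /eqP; rewrite scaler_eq0 (negbTE uv0) orbF.
  by rewrite inE.
have oppv (w : L) : - w = w by rewrite -scaleN1r (oppr_pchar2 char2) scale1r.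
pose v' := g^-1 *: v.
have v'f : v' \in fixedv x by rewrite memvZ.
have Euv' : br u v' = x by rewrite brZr Eg scalerA mulVf ?scale1r.
split=> //; exists u, v', x; split=> //.
- exact: fixed_pair_basis.
- by move/fixedvP: v'f => Pv'; rewrite brC Pv' oppv.
- by move/fixedvP: uf => Pu; rewrite brC Pu oppv.
apply/subv_anti/andP; split; last by rewrite -memvE.
apply/subvP => y yQ.
have : y \in (fixedv x + <[x]>)%VS by rewrite fixedv_add_line memvf.
case/memv_addP => w wf [_ /vlineP [k ->] Ey].
have wQ : w \in Q by rewrite -(addrK (k *: x) w) -Ey memvB ?memvZ.
by rewrite Ey (fixed_plane_vector0 uf v'f Euv' wf (Qplane w wQ)) add0r memvZ ?memv_line.
Qed.

End FixedSpace.

End LieAlgebra.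

Theorem proposition3p2 (F : fieldType) (L : vectType F) (br : L -> L -> L)
    (Hlie : is_lie_bracket br) (Q : {vspace L})
    (HQ : quasi_ideal br Q) (Hproper : Q != fullv)
    (Hmod : modular_star br Q) :
  strong_quasi_ideal br Q /\
  (strong_ideal br Q \/ almost_abelian br \/
   (2%N \in [pchar F] /\ iso_K_with br Q)).
Proof.
split; first exact: strong_quasi_ideal_of_modular.
have [SI | notSI] := classic (strong_ideal br Q); first by left.
right; have [x xQ Hx] := ad_identity_mod_line Hlie HQ Hproper Hmod notSI.
have Qplane : {in Q, forall c y, br c y \in (<[c]> + <[y]>)%VS}.
  by move=> c cQ y; apply: (bracket_in_plane Hlie HQ Hproper Hmod y cQ).
have [[u [v [uf vf uv]]] | comm] :=
  classic (exists u v, [/\ u \in fixedv Hlie x, v \in fixedv Hlie x & br u v != 0]).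
  by right; apply: (iso_K_of_fixed_noncommute Hx xQ Qplane uf vf uv).
left; apply: (almost_abelian_of_fixed_commute Hx) => u v uf vf.
by apply/eqP; apply: contra_notT comm => uv; exists u, v.
Qed.
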